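(* For each $n$, let $X_n=(X_n(t))_{t\in\mathbb Z_{\ge0}}$ be a discrete-time Markov chain on a finite state space, irreducible, with transition matrix $P_n$ and (unique) stationary law $\pi_n$, and let $A_n$ be a subset of the state space. Let $T_{A_n}:=\inf\{t\ge0:X_n(t)\in A_n\}$, for $t\ge1$ let $E_t:=\mathbf 1\{X_n(t-1)\notin A_n,\ X_n(t)\in A_n\}$, let $\mu_n:=\mathbb P_{\pi_n}(E_1=1)$, and for $h\ge0$ let $\alpha_n(h):=\sup_x\|P_n^h(x,\cdot)-\pi_n\|_{\mathrm{TV}}$. Let $x_n$ be a sequence of initial states. Assume $\pi_n(A_n)\to0$ and $\mu_n\to0$. Suppose there are integers $b_n,h_n,r_n\to\infty$ such that $h_n=o(b_n)$, $b_n\mu_n\to0$, $\alpha_n(h_n)=o(b_n\mu_n)$, and (M1) with $N_n^{(b)}:=\sum_{t=1}^{b_n}E_t$, one has $\mathbb P_{\pi_n}(N_n^{(b)}\ge1)=b_n\mu_n(1+o(1))$; (M2) $\mathbb P_{x_n}(T_{A_n}\le r_n)=o(1)$, $\|P_n^{r_n}(x_n,\cdot)-\pi_n\|_{\mathrm{TV}}=o(1)$, and $r_n\mu_n=o(1)$. Then $\mu_nT_{A_n}\Rightarrow\mathrm{Exp}(1)$ (convergence in distribution) under $\mathbb P_{x_n}$, as $n\to\infty$.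
   Context: $\mathbb P_\eta$ denotes the law of the chain started from initial distribution $\eta$ (or from a state $x$ for $\mathbb P_x$). $\|\cdot\|_{\mathrm{TV}}$ is total variation distance. $\mathrm{Exp}(1)$ is the exponential distribution with mean 1. *)

From HB Require Import structures.
From mathcomp Require Import all_boot all_order all_algebra.
From mathcomp Require Import all_classical all_reals all_analysis.
Unset Printing Implicit Defensive.
Import Order.TTheory GRing.Theory Num.Theory.
Local Open Scope ring_scope.

Section FiniteMarkovChain.
Context {R : realType} {S : finType}.

Definition stochastic (P : S -> S -> R) : Prop :=
  (forall x y, 0 <= P x y) /\ (forall x, \sum_(y : S) P x y = 1).

Fixpoint Ppow (P : S -> S -> R) (h : nat) : S -> S -> R :=
  match h with
  | 0 => fun x y => (x == y)%:R
  | h'.+1 => fun x y => \sum_(z : S) Ppow P h' x z * P z y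
  end.

Definition irreducible (P : S -> S -> R) : Prop :=
  forall x y, exists k : nat, 0 < Ppow P k x y.

Definition stationary (P : S -> S -> R) (pi : S -> R) : Prop :=
  [/\ forall x, 0 <= pi x, \sum_(x : S) pi x = 1
    & forall y, \sum_(x : S) pi x * P x y = pi y].

(* point mass at x (initial law for P_x) *)
Definition pt_law (x : S) : S -> R := fun y => (y == x)%:R.

(* law of the trajectory (X(0),...,X(m)) of the chain with initial law eta *)
Definition path_prob (P : S -> S -> R) (eta : S -> R) (m : nat)
  (w : {ffun 'I_m.+1 -> S}) : R :=
  eta (w ord0) * \prod_(i < m) P (w (widen_ord (leqnSn m) i)) (w (lift ord0 i)).

(* P_eta(E) for an event E depending on X(0),...,X(m) *)
Definition Pr (P : S -> S -> R) (eta : S -> R) (m : nat)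
  (E : pred {ffun 'I_m.+1 -> S}) : R :=
  \sum_(w | E w) path_prob P eta m w.

(* E_{i+1} = 1{X(i) \notin A, X(i+1) \in A}, for i : 'I_m *)
Definition entry (A : {set S}) (m : nat) (w : {ffun 'I_m.+1 -> S}) (i : 'I_m) : bool :=
  (w (widen_ord (leqnSn m) i) \notin A) && (w (lift ord0 i) \in A).

Definition mu (P : S -> S -> R) (pi : S -> R) (A : {set S}) : R :=
  Pr P pi 1 [pred w | entry A 1 w ord0].

Definition Npos (A : {set S}) (b : nat) : pred {ffun 'I_b.+1 -> S} :=
  [pred w : {ffun 'I_b.+1 -> S} | [exists i : 'I_b, entry A b w i]].

Definition hit_by (A : {set S}) (m : nat) : pred {ffun 'I_m.+1 -> S} :=
  [pred w : {ffun 'I_m.+1 -> S} | [exists i : 'I_m.+1, w i \in A]].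

(* the event {c * T_A <= t}, observed on the horizon 0..m *)
Definition scaled_hit_le (A : {set S}) (c t : R) (m : nat) : pred {ffun 'I_m.+1 -> S} :=
  [pred w : {ffun 'I_m.+1 -> S} | [exists i : 'I_m.+1, (w i \in A) && (c * (i : nat)%:R <= t)]].

Definition dTV (p q : S -> R) : R :=
  \big[Num.max/0]_(B : {set S}) `|\sum_(y in B) (p y - q y)|.

Definition alpha (P : S -> S -> R) (pi : S -> R) (h : nat) : R :=
  \big[Num.max/0]_(x : S) dTV (Ppow P h x) pi.

End FiniteMarkovChain.

(* Let F(k) = P_pi(no entrance into A at times 1..k) and G(m) = P_x(T_A > m).
   Cutting a path after n steps and letting the chain mix during h steps gives
   F(n + b) = F(n) (F(b - h) +- alpha(h)) up to h mu, the most mass that can enter A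
   during the gap. Hence F(k b) is F(b - h)^k up to o(1), and since (M1) gives
   1 - F(b - h) = b mu (1 + o(1)), F(t / mu) -> exp(-t). Finally, by (M2) the chain
   started at x mixes by time r before hitting A, so
   |G(s) - F(s)| <= P_x(T_A <= r) + ||P^r(x,.) - pi||_TV + r mu -> 0. *)

From Pilot Require Import Defs.
From HB Require Import structures.
From mathcomp Require Import all_boot all_order all_algebra.
From mathcomp Require Import all_classical all_reals all_analysis.
From mathcomp Require Import lra ring.
Import Order.TTheory GRing.Theory Num.Theory numFieldNormedType.Exports.

Local Open Scope ring_scope.

Section KernelPowers.
Context {R : realType} {S : finType}.
Implicit Types (v : S -> R) (M : S -> S -> R).

Definition vmul v M : S -> R := fun y => \sum_z v z * M z y.

Fixpoint vpow v M k : S -> R := if k is k'.+1 then vmul (vpow v M k') M else v.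

Definition mass v : R := \sum_y v y.

Definition killed M (c : S -> S -> bool) : S -> S -> R := fun z y => M z y * (c z y)%:R.

Definition vrestr (d : pred S) v : S -> R := fun y => v y * (d y)%:R.

Lemma vrestr_predT v : vrestr predT v = v.
Proof. by apply/funext => y; rewrite /vrestr mulr1. Qed.

Lemma killed_predT M : killed M (fun _ _ => true) = M.
Proof. by apply/funext => z; apply/funext => y; rewrite /killed mulr1. Qed.

Lemma pt_law_ge0 (x y : S) : 0 <= pt_law x y :> R.
Proof. exact: ler0n. Qed.

Lemma mass_pt_law (x : S) : mass (pt_law x) = 1 :> R.
Proof. by rewrite /mass (bigD1 x) //= big1 ?addr0 /pt_law ?eqxx // => y /negbTE ->. Qed.

Lemma vpow_add v M j k : vpow v M (j + k) = vpow (vpow v M j) M k.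
Proof. by elim: k => [|k IH]; rewrite ?addn0 // addnS /= IH. Qed.

Lemma Ppow_vpow M h x y : Ppow M h x y = vpow (pt_law x) M h y.
Proof.
elim: h y => [|h IH] y /=; first by rewrite /pt_law eq_sym.
by apply: eq_bigr => z _; rewrite IH.
Qed.

Lemma vpow_ge0 v M k : (forall y, 0 <= v y) -> (forall z y, 0 <= M z y) ->
  forall y, 0 <= vpow v M k y.
Proof.
move=> v_ge0 M_ge0; elim: k => [|k IH] y //=.
by apply: sumr_ge0 => z _; apply: mulr_ge0.
Qed.

Lemma vpow_le v v' M M' k : (forall y, 0 <= v y) -> (forall y, v y <= v' y) ->
  (forall z y, 0 <= M z y) -> (forall z y, M z y <= M' z y) ->
  forall y, vpow v M k y <= vpow v' M' k y.
Proof.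
move=> v_ge0 le_vv' M_ge0 le_MM'; elim: k => [|k IH] y //=.
by apply: ler_sum => z _; apply: ler_pM => //; apply: vpow_ge0.
Qed.

Lemma vpow_pt_law v M k y : vpow v M k y = \sum_z v z * vpow (pt_law z) M k y.
Proof.
elim: k y => [|k IH] y /=.
  rewrite (bigD1 y) //= big1 ?addr0 /pt_law ?eqxx ?mulr1 // => z /negbTE zy.
  by rewrite eq_sym zy mulr0.
rewrite /vmul (eq_bigr (fun u => \sum_z v z * vpow (pt_law z) M k u * M u y)); last first.
  by move=> u _; rewrite IH big_distrl.
rewrite exchange_big /=; apply: eq_bigr => z _.
by rewrite big_distrr /=; apply: eq_bigr => u _; rewrite mulrA.
Qed.

Lemma mass_vpow_pt_law v M k : mass (vpow v M k) = \sum_z v z * mass (vpow (pt_law z) M k).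
Proof.
rewrite /mass; under eq_bigr do rewrite vpow_pt_law.
by rewrite exchange_big /=; apply: eq_bigr => z _; rewrite big_distrr.
Qed.

Lemma mass_vmul v M : mass (vmul v M) = \sum_z v z * \sum_y M z y.
Proof.
rewrite /mass /vmul exchange_big /=.
by apply: eq_bigr => z _; rewrite big_distrr.
Qed.

Lemma mass_sub_vmul v M : mass v - mass (vmul v M) = \sum_z v z * (1 - \sum_y M z y).
Proof. by rewrite mass_vmul /mass -sumrB; apply: eq_bigr => z _; rewrite mulrBr mulr1. Qed.

Lemma mass_vpow_ge0 v M k : (forall y, 0 <= v y) -> (forall z y, 0 <= M z y) ->
  0 <= mass (vpow v M k).
Proof. by move=> v_ge0 M_ge0; apply: sumr_ge0 => y _; apply: vpow_ge0. Qed.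

Lemma mass_vpow_le v M k : (forall y, 0 <= v y) -> (forall z y, 0 <= M z y) ->
  (forall z, \sum_y M z y <= 1) -> mass (vpow v M k) <= mass v.
Proof.
move=> v_ge0 M_ge0 M_sub; elim: k => [|k IH] //=.
apply: le_trans IH; rewrite mass_vmul; apply: ler_sum => z _.
by rewrite ler_piMr ?vpow_ge0.
Qed.

Lemma mass_vpow_eq v M k : (forall z, \sum_y M z y = 1) -> mass (vpow v M k) = mass v.
Proof.
move=> M_sto; elim: k => [|k IH] //=.
by rewrite mass_vmul -IH; apply: eq_bigr => z _; rewrite M_sto mulr1.
Qed.

Definition snoc m (w : {ffun 'I_m.+1 -> S}) (y : S) : {ffun 'I_m.+2 -> S} :=
  [ffun i : 'I_m.+2 => if (i < m.+1)%N then w (inord i) else y].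
Arguments snoc {m}.

Lemma snoc_widen m (w : {ffun 'I_m.+1 -> S}) y (j : 'I_m.+1) :
  snoc w y (widen_ord (leqnSn m.+1) j) = w j.
Proof.
by rewrite ffunE /= ltn_ord; congr (w _); apply: val_inj; rewrite /= inordK.
Qed.

Lemma snoc_max m (w : {ffun 'I_m.+1 -> S}) y : snoc w y ord_max = y.
Proof. by rewrite ffunE /= ltnn. Qed.

Lemma snoc_bij m : bijective (fun p : {ffun 'I_m.+1 -> S} * S => snoc p.1 p.2).
Proof.
exists (fun w : {ffun 'I_m.+2 -> S} =>
  ([ffun j => w (widen_ord (leqnSn m.+1) j)], w ord_max)).
  move=> [w y] /=; congr pair; last exact: snoc_max.
  by apply/ffunP => j; rewrite ffunE snoc_widen.
move=> w; apply/ffunP => i; rewrite !ffunE; case: ifP => lt_im.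
  by congr (w _); apply: val_inj; rewrite /= inordK.
congr (w _); apply: val_inj => /=.
by have := ltn_ord i; rewrite ltnS leq_eqVlt lt_im orbF => /eqP.
Qed.

Lemma path_prob_snoc M v m (w : {ffun 'I_m.+1 -> S}) y :
  path_prob M v m.+1 (snoc w y) = path_prob M v m w * M (w ord_max) y.
Proof.
rewrite /path_prob big_ord_recr /= -mulrA; congr (_ * _).
  have -> : (ord0 : 'I_m.+2) = widen_ord (leqnSn m.+1) ord0 by apply: val_inj.
  by rewrite snoc_widen.
congr (_ * _).
  apply: eq_bigr => i _.
  have -> : lift ord0 (widen_ord (leqnSn m) i) = widen_ord (leqnSn m.+1) (lift ord0 i)
    by apply: val_inj.
  by rewrite !snoc_widen.
have -> : lift ord0 (ord_max : 'I_m.+1) = (ord_max : 'I_m.+2) by apply: val_inj.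
by rewrite snoc_widen snoc_max.
Qed.

Lemma sum_path_prob_last M v m z :
  \sum_(w : {ffun 'I_m.+1 -> S} | w ord_max == z) path_prob M v m w = vpow v M m z.
Proof.
elim: m z => [|m IH] z.
  rewrite (reindex (fun y : S => [ffun _ : 'I_1 => y])) /=; last first.
    apply: onW_bij; exists (fun w : {ffun 'I_1 -> S} => w ord0).
      by move=> y; rewrite ffunE.
    by move=> w; apply/ffunP => i; rewrite ffunE (ord1 i).
  rewrite (big_pred1 z); last by move=> y; rewrite /= ffunE.
  by rewrite /path_prob big_ord0 mulr1 ffunE.
rewrite (reindex (fun p : {ffun 'I_m.+1 -> S} * S => snoc p.1 p.2)) /=;
  last exact/onW_bij/snoc_bij.
under eq_bigl do rewrite snoc_max.
under eq_bigr do rewrite path_prob_snoc.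
rewrite (eq_bigl (fun p : {ffun 'I_m.+1 -> S} * S => predT p.1 && (p.2 == z))) //.
rewrite -(pair_big predT (pred1 z) (fun w y => path_prob M v m w * M (w ord_max) y)) /=.
under eq_bigr do rewrite (big_pred1 z) //.
rewrite /vmul; under [RHS]eq_bigr do rewrite -IH.
rewrite (partition_big (fun w : {ffun 'I_m.+1 -> S} => w ord_max) predT) //=.
by apply: eq_bigr => u _; rewrite big_distrl /=; apply: eq_bigr => w /eqP ->.
Qed.

Lemma prod_nat_bool m (B : 'I_m -> bool) : \prod_(i < m) ((B i)%:R : R) = [forall i, B i]%:R.
Proof.
case: (boolP [forall i, B i]) => [/forallP allB|/forallPn [i /negbTE Bi]].
  by rewrite big1 // => i _; rewrite allB.
by rewrite (bigD1 i) //= Bi mul0r.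
Qed.

Lemma Pr_killed M eta m (d : pred S) (c : S -> S -> bool) :
  Pr M eta m [pred w : {ffun 'I_m.+1 -> S} | d (w ord0) &&
     [forall i : 'I_m, c (w (widen_ord (leqnSn m) i)) (w (lift ord0 i))]]
  = mass (vpow (vrestr d eta) (killed M c) m).
Proof.
rewrite /Pr big_mkcond /=.
rewrite (eq_bigr (path_prob (killed M c) (vrestr d eta) m)); last first.
  move=> w _; rewrite /path_prob /vrestr /killed big_split /= prod_nat_bool.
  by case: (d _); case: [forall i, _]; rewrite /= ?mulr0 ?mul0r ?mulr1.
rewrite (partition_big (fun w : {ffun 'I_m.+1 -> S} => w ord_max) predT) //=.
by apply: eq_bigr => z _; rewrite sum_path_prob_last.
Qed.

Lemma Pr_predC M eta m (E : pred {ffun 'I_m.+1 -> S}) :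
  stochastic M -> Pr M eta m E = mass eta - Pr M eta m (predC E).
Proof.
move=> [_ M_sto]; have total : \sum_w path_prob M eta m w = mass eta.
  have := Pr_killed M eta m predT (fun _ _ => true).
  rewrite vrestr_predT killed_predT mass_vpow_eq // /Pr => <-.
  by apply: eq_bigl => w; apply/esym/forallP.
by rewrite -total (bigID E) /= addrK.
Qed.

End KernelPowers.

Section TotalVariation.
Context {R : realType} {S : finType}.

Lemma sum_mul_le_pos_part (g f : S -> R) : (forall z, 0 <= f z <= 1) ->
  \sum_z g z * f z <= \sum_(z in [set z | 0 < g z]) g z.
Proof.
move=> f01; rewrite (bigID (mem [set z | 0 < g z])) /= -[leRHS]addr0.
apply: lerD.
  apply: ler_sum => z; rewrite inE => g_gt0.
  by rewrite ler_piMr ?(ltW g_gt0) //; case/andP: (f01 z).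
apply: sumr_le0 => z; rewrite inE -leNgt => g_le0.
by rewrite mulr_le0_ge0 //; case/andP: (f01 z).
Qed.

Lemma dTV_ge (u v : S -> R) (B : {set S}) : `|\sum_(y in B) (u y - v y)| <= dTV u v.
Proof. exact: (le_bigmax 0 (fun B : {set S} => `|\sum_(y in B) (u y - v y)|) B). Qed.

Lemma dTV_ge0 (u v : S -> R) : 0 <= dTV u v.
Proof. exact: le_trans (normr_ge0 _) (dTV_ge u v finset.set0). Qed.

Lemma dTV_test_fun (u v f : S -> R) : (forall z, 0 <= f z <= 1) ->
  `|\sum_z u z * f z - \sum_z v z * f z| <= dTV u v.
Proof.
move=> f01; rewrite -sumrB (eq_bigr (fun z => (u z - v z) * f z)); last first.
  by move=> z _; rewrite mulrBl.
rewrite ler_norml; apply/andP; split.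
  rewrite lerNl -sumrN; under eq_bigr do rewrite -mulNr.
  apply: le_trans (sum_mul_le_pos_part _ _ f01) _.
  apply: le_trans (dTV_ge u v [set z | 0 < - (u z - v z)]).
  by rewrite sumrN -normrN ler_norm.
apply: le_trans (sum_mul_le_pos_part _ _ f01) _.
by apply: le_trans (dTV_ge u v [set z | 0 < u z - v z]); rewrite ler_norm.
Qed.

Lemma sum_mul_sub_bounds (u u' f : S -> R) :
  (forall z, u' z <= u z) -> (forall z, 0 <= f z <= 1) ->
  0 <= \sum_z u z * f z - \sum_z u' z * f z <= \sum_z u z - \sum_z u' z.
Proof.
move=> le_u'u f01; rewrite -!sumrB; apply/andP; split.
  apply: sumr_ge0 => z _; rewrite -mulrBl mulr_ge0 ?subr_ge0 //.
  by case/andP: (f01 z).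
apply: ler_sum => z _; rewrite -mulrBl ler_piMr ?subr_ge0 //.
by case/andP: (f01 z).
Qed.

Lemma dTV_le_alpha (P : S -> S -> R) (pi : S -> R) h x : dTV (Ppow P h x) pi <= alpha P pi h.
Proof. exact: (le_bigmax 0 (fun x => dTV (Ppow P h x) pi) x). Qed.

Lemma alpha_ge0 (P : S -> S -> R) (pi : S -> R) h : 0 <= alpha P pi h.
Proof.
rewrite /alpha; elim/big_ind: _ => //; last by move=> x _; exact: dTV_ge0.
by move=> a c a_ge0 c_ge0; rewrite le_max a_ge0.
Qed.

End TotalVariation.

Section Entrances.
Context {R : realType} {S : finType} (P : S -> S -> R) (pi : S -> R) (A : {set S}).
Hypothesis P_sto : stochastic P.
Hypothesis pi_stat : stationary P pi.
Implicit Types v : S -> R.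

Definition no_entry (z y : S) : bool := ~~ ((z \notin A) && (y \in A)).

Local Notation K := (killed P no_entry).

(* P_pi(N^(k) = 0), where N^(k) counts the entrances into A at times 1..k. *)
Definition noentry_prob k : R := mass (vpow pi K k).

Definition noentry_from k (z : S) : R := mass (vpow (pt_law z) K k).

Local Notation F := noentry_prob.
Local Notation mu := (mu P pi A).

Let P_ge0 z y : 0 <= P z y. Proof. by case: P_sto. Qed.
Let P_sum z : \sum_y P z y = 1. Proof. by case: P_sto. Qed.
Let pi_ge0 y : 0 <= pi y. Proof. by case: pi_stat. Qed.
Let mass_pi : mass pi = 1. Proof. by case: pi_stat. Qed.

Lemma killed_ge0 c z y : 0 <= killed P c z y.
Proof. by rewrite mulr_ge0 ?P_ge0 ?ler0n. Qed.

Lemma killed_le c z y : killed P c z y <= P z y.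
Proof. by rewrite /killed; case: (c z y); rewrite ?mulr1 ?mulr0 ?lexx ?P_ge0. Qed.

Lemma sum_killed_le1 c z : \sum_y killed P c z y <= 1.
Proof. by rewrite -(P_sum z); apply: ler_sum => y _; apply: killed_le. Qed.

Lemma noentry_from_bounds k z : 0 <= noentry_from k z <= 1.
Proof.
apply/andP; split; first by apply: mass_vpow_ge0; [exact: pt_law_ge0|exact: killed_ge0].
rewrite -(mass_pt_law z).
by apply: mass_vpow_le; [exact: pt_law_ge0|exact: killed_ge0|exact: sum_killed_le1].
Qed.

Lemma noentry_prob_pt_law k : F k = \sum_z pi z * noentry_from k z.
Proof. exact: mass_vpow_pt_law. Qed.

Lemma vpow_stationary k y : vpow pi P k y = pi y.
Proof.
elim: k y => [|k IH] y //=; case: pi_stat => _ _ <-.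
by apply: eq_bigr => z _; rewrite IH.
Qed.

Lemma vpow_killed_le_pi k y : vpow pi K k y <= pi y.
Proof.
rewrite -(vpow_stationary k y).
by apply: vpow_le => //; [exact: killed_ge0|exact: killed_le].
Qed.

Lemma vpow_killed_ge0 v k y : (forall y, 0 <= v y) -> 0 <= vpow v K k y.
Proof. by move=> v_ge0; apply: vpow_ge0 => //; exact: killed_ge0. Qed.

Lemma vpow_killed_le_vpow v k y : (forall y, 0 <= v y) -> vpow v K k y <= vpow v P k y.
Proof.
by move=> v_ge0; apply: vpow_le => //; [exact: killed_ge0|exact: killed_le].
Qed.

Lemma noentry_prob0 : F 0 = 1.
Proof. exact: mass_pi. Qed.

Lemma noentry_prob_ge0 k : 0 <= F k.
Proof. by apply: mass_vpow_ge0; [exact: pi_ge0|exact: killed_ge0]. Qed.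

Lemma noentry_prob_le m m' : (m <= m')%N -> F m' <= F m.
Proof.
move=> le_mm'; rewrite /noentry_prob -(subnKC le_mm') vpow_add.
apply: mass_vpow_le; [|exact: killed_ge0|exact: sum_killed_le1].
by move=> y; apply: vpow_killed_ge0; exact: pi_ge0.
Qed.

Lemma noentry_prob_le1 k : F k <= 1.
Proof. by rewrite -noentry_prob0 noentry_prob_le. Qed.

Lemma Pr_Npos b : Pr P pi b (Npos A b) = 1 - F b.
Proof.
rewrite Pr_predC // mass_pi /noentry_prob; congr (_ - _).
rewrite -[in RHS](vrestr_predT pi) -Pr_killed /Pr; apply: eq_bigl => w /=.
by rewrite negb_exists; apply: eq_forallb => i.
Qed.

Lemma mu_noentry_prob : mu = 1 - F 1.
Proof.
rewrite /Defs.mu -Pr_Npos /Pr; apply: eq_bigl => w /=.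
by apply/idP/existsP => [|[i]]; [exists ord0 | rewrite (ord1 i)].
Qed.

Lemma mu_ge0 : 0 <= mu.
Proof. by rewrite mu_noentry_prob subr_ge0 noentry_prob_le1. Qed.

(* The mass lost in one step is sum_z v z * P(z enters A), which is monotone in v
   and equals mu for v = pi. *)
Lemma mass_sub_vmul_killed_le v : (forall y, 0 <= v y <= pi y) ->
  mass v - mass (vmul v K) <= mu.
Proof.
move=> v_le_pi; rewrite mu_noentry_prob -mass_pi /noentry_prob /= !mass_sub_vmul.
apply: ler_sum => z _; apply: ler_wpM2r; first by rewrite subr_ge0 sum_killed_le1.
by case/andP: (v_le_pi z).
Qed.

Lemma noentry_prob_sub_le k j : F k - F (k + j) <= j%:R * mu.
Proof.
elim: j => [|j IH]; first by rewrite addn0 subrr mul0r.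
have step : F (k + j) - F (k + j.+1) <= mu.
  rewrite /noentry_prob addnS /=; apply: mass_sub_vmul_killed_le => y.
  apply/andP; split; [apply: vpow_killed_ge0; exact: pi_ge0|exact: vpow_killed_le_pi].
rewrite mulrSr mulrDl mul1r; lra.
Qed.

Lemma mixing_bound v m h : (forall y, 0 <= v y) ->
  `|mass (vpow (vpow v P h) K m) - mass v * F m| <= mass v * alpha P pi h.
Proof.
move=> v_ge0.
have -> : mass (vpow (vpow v P h) K m) = \sum_w v w * \sum_z Ppow P h w z * noentry_from m z.
  rewrite mass_vpow_pt_law; under eq_bigr do rewrite vpow_pt_law big_distrl /=.
  rewrite exchange_big /=; apply: eq_bigr => w _; rewrite big_distrr /=.
  by apply: eq_bigr => z _; rewrite Ppow_vpow mulrA.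
rewrite /mass !big_distrl /= -sumrB; apply: le_trans (ler_norm_sum _ _ _) _.
apply: ler_sum => w _; rewrite -mulrBr normrM (ger0_norm (v_ge0 w)) ler_wpM2l //.
rewrite noentry_prob_pt_law; apply: le_trans (dTV_le_alpha P pi h w).
exact/dTV_test_fun/noentry_from_bounds.
Qed.

Lemma noentry_prob_split n h j : (h <= j)%N ->
  F (n + j) = mass (vpow (vpow (vpow pi K n) K h) K (j - h)).
Proof. by move=> le_hj; rewrite /noentry_prob -!vpow_add subnKC. Qed.

(* Replacing the first h steps of the killed chain by free steps of P lets the
   chain mix before the remaining block of length j - h. *)
Lemma noentry_prob_block_le n j h : (h <= j)%N ->
  F (n + j) <= F n * (F (j - h) + alpha P pi h).
Proof.
move=> le_hj; rewrite (noentry_prob_split n h) //; set v := vpow pi K n.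
have v_ge0 y : 0 <= v y by apply: vpow_killed_ge0; exact: pi_ge0.
apply: (@le_trans _ _ (mass (vpow (vpow v P h) K (j - h)))).
  apply: ler_sum => y _; apply: vpow_le.
  - by move=> z; apply: vpow_killed_ge0.
  - by move=> z; apply: vpow_killed_le_vpow.
  - exact: killed_ge0.
  - by move=> z t.
have := mixing_bound v (j - h) h v_ge0; rewrite ler_norml => /andP[_].
by rewrite lerBlDl -mulrDr.
Qed.

(* Conversely, during those h free steps at most h * mu of mass can enter A. *)
Lemma noentry_prob_block_ge n j h : (h <= j)%N ->
  F n * (F (j - h) - alpha P pi h) - h%:R * mu <= F (n + j).
Proof.
move=> le_hj; rewrite (noentry_prob_split n h) //; set v := vpow pi K n.
have v_ge0 y : 0 <= v y by apply: vpow_killed_ge0; exact: pi_ge0.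
have mass_v : mass v = F n by [].
have := mixing_bound v (j - h) h v_ge0; rewrite ler_norml => /andP[+ _].
rewrite lerBrDl mass_v => mix.
have gap : mass (vpow (vpow v P h) K (j - h)) - mass (vpow (vpow v K h) K (j - h))
           <= h%:R * mu.
  rewrite !mass_vpow_pt_law.
  have /andP[_] := sum_mul_sub_bounds (vpow v P h) (vpow v K h) (noentry_from (j - h))
    (fun z => vpow_killed_le_vpow v h z v_ge0)
    (noentry_from_bounds _).
  move/le_trans; apply; rewrite -!/(mass _) mass_vpow_eq //.
  by rewrite /v -vpow_add; apply: noentry_prob_sub_le.
rewrite mulrBr; lra.
Qed.

Lemma noentry_prob_blocks_le b h k : (h <= b)%N ->
  F (k * b) <= (F (b - h) + alpha P pi h) ^+ k.
Proof.
move=> le_hb; elim: k => [|k IH]; first by rewrite mul0n expr0 noentry_prob0.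
rewrite mulSnr exprSr; apply: le_trans (noentry_prob_block_le _ _ _ le_hb) _.
by apply: ler_wpM2r => //; rewrite addr_ge0 ?alpha_ge0 ?noentry_prob_ge0.
Qed.

Lemma noentry_prob_blocks_ge b h k : (h <= b)%N -> 0 <= F (b - h) - alpha P pi h ->
  (F (b - h) - alpha P pi h) ^+ k - k%:R * (h%:R * mu) <= F (k * b).
Proof.
move=> le_hb c_ge0; set c := F (b - h) - alpha P pi h.
have c_le1 : c <= 1.
  by have := noentry_prob_le1 (b - h); have := alpha_ge0 P pi h; rewrite /c; lra.
have hmu_ge0 : 0 <= h%:R * mu by rewrite mulr_ge0 ?mu_ge0.
elim: k => [|k IH]; first by rewrite mul0n expr0 mul0r subr0 noentry_prob0.
rewrite mulSnr exprSr.
have block := noentry_prob_block_ge (k * b) b h le_hb; rewrite -/c in block.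
have IHc : (c ^+ k - k%:R * (h%:R * mu)) * c <= F (k * b) * c by apply: ler_wpM2r.
have err : k%:R * (h%:R * mu) * c <= k%:R * (h%:R * mu).
  by rewrite ler_piMr // mulr_ge0 ?ler0n.
rewrite mulrSr mulrDl mul1r; rewrite mulrBl in IHc; lra.
Qed.

End Entrances.

Section PositiveSupport.
Context {R : realType} {S : finType} (P : S -> S -> R).
Hypothesis P_ge0 : forall z y, 0 <= P z y.

Lemma Ppow_ge0 k z y : 0 <= Ppow P k z y.
Proof. by rewrite Ppow_vpow; apply: vpow_ge0 => //; exact: pt_law_ge0. Qed.

Lemma Ppow_closed (B : pred S) : (forall z y, B z -> 0 < P z y -> B y) ->
  forall k z y, B z -> 0 < Ppow P k z y -> B y.
Proof.
move=> B_closed; elim=> [|k IH] z y Bz /=.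
  by rewrite lt0r pnatr_eq0 eqb0 negbK => /andP[/eqP <-].
move=> Pk1_pos; have [u] : exists u, 0 < Ppow P k z u * P u y.
  apply/existsP; apply: contraLR Pk1_pos => /existsPn all_le0.
  by rewrite -leNgt; apply: sumr_le0 => u _; rewrite leNgt; apply: all_le0.
rewrite !lt0r mulf_eq0 negb_or => /andP[/andP[Pk_neq0 P_neq0] _].
apply: B_closed (IH z u Bz _) _; first by rewrite lt0r Pk_neq0 Ppow_ge0.
by rewrite lt0r P_neq0 P_ge0.
Qed.

End PositiveSupport.

Section EntranceRate.
Context {R : realType} {S : finType} (P : S -> S -> R) (pi : S -> R) (A : {set S}).
Hypothesis P_sto : stochastic P.
Hypothesis pi_stat : stationary P pi.

Let P_ge0 z y : 0 <= P z y. Proof. by case: P_sto. Qed.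
Let pi_ge0 y : 0 <= pi y. Proof. by case: pi_stat. Qed.

Lemma mu_entrance_sum : mu P pi A = \sum_(z | z \notin A) \sum_(y in A) pi z * P z y.
Proof.
have [_ P_sum] := P_sto; have [_ mass_pi _] := pi_stat.
rewrite mu_noentry_prob // -mass_pi /noentry_prob /= mass_sub_vmul [RHS]big_mkcond /=.
apply: eq_bigr => z _; rewrite -(P_sum z) -sumrB big_distrr /=.
case: (boolP (z \in A)) => zA /=.
  by rewrite big1 // => y _; rewrite /killed /no_entry zA /= mulr1 subrr mulr0.
rewrite [RHS]big_mkcond /=; apply: eq_bigr => y _; rewrite /killed /no_entry zA /=.
by case: (y \in A); rewrite /= ?mulr1 ?mulr0 ?subrr ?subr0 ?mulr0.
Qed.

Lemma stationary_mul_le z y : pi z * P z y <= pi y.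
Proof.
have [_ _ pi_inv] := pi_stat; rewrite -(pi_inv y) (bigD1 z) //= lerDl.
by apply: sumr_ge0 => u _; apply: mulr_ge0.
Qed.

(* If mu = 0, the stationary mass outside A never flows into A, so irreducibility
   forces A to be unreachable from that mass. *)
Lemma mu_gt0 : irreducible P -> A != finset.set0 -> \sum_(y in A) pi y < 1 ->
  0 < mu P pi A.
Proof.
move=> P_irr /set0Pn[a aA] piA_lt1; rewrite lt0r mu_ge0 // andbT.
apply/negP => /eqP mu0.
have no_entrance z y : z \notin A -> y \in A -> pi z * P z y = 0.
  move=> zA yA; rewrite mu_entrance_sum in mu0.
  have inner_ge0 z' : 0 <= \sum_(y' in A) pi z' * P z' y'.
    by apply: sumr_ge0 => y' _; apply: mulr_ge0.
  have := psumr_eq0P (fun z' _ => inner_ge0 z') mu0 zA.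
  by move/psumr_eq0P; apply=> // y' _; apply: mulr_ge0.
pose B z := (z \notin A) && (0 < pi z).
have B_closed z y : B z -> 0 < P z y -> B y.
  case/andP=> zA pi_z Pzy; apply/andP; split.
    by apply/negP => yA; have := mulr_gt0 pi_z Pzy; rewrite no_entrance // ltxx.
  exact: lt_le_trans (mulr_gt0 pi_z Pzy) (stationary_mul_le z y).
have [z Bz] : exists z, B z.
  apply/existsP; apply: contraLR piA_lt1 => /existsPn noB.
  have [_ <- _] := pi_stat; rewrite -leNgt (bigID (mem A)) /= -[leRHS]addr0 lerD2l.
  by apply: sumr_le0 => y yA; move: (noB y); rewrite /B yA /= -leNgt.
have [k Pk_pos] := P_irr z a.
by have := Ppow_closed P P_ge0 B B_closed k z a Bz Pk_pos; rewrite /B aA.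
Qed.

End EntranceRate.

Section Hitting.
Context {R : realType} {S : finType} (P : S -> S -> R) (pi : S -> R) (A : {set S}) (x : S).
Hypothesis P_sto : stochastic P.
Hypothesis pi_stat : stationary P pi.
Implicit Types v : S -> R.

Local Notation K := (killed P (no_entry A)).
Local Notation L := (killed P (fun _ y => y \notin A)).
Local Notation x_off_A := (vrestr (fun y => y \notin A) (pt_law x : S -> R)).
Local Notation F := (noentry_prob P pi A).
Local Notation mu := (mu P pi A).

(* P_x(T_A > m); unlike [K], the kernel [L] also kills the steps from A into A, which
   makes no difference once the chain starts off A. *)
Definition nohit_prob m : R := mass (vpow x_off_A L m).

Local Notation G := nohit_prob.

Let x_off_A_ge0 y : 0 <= x_off_A y.
Proof. by apply: mulr_ge0; [exact: pt_law_ge0|exact: ler0n]. Qed.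

Let x_off_A_le y : x_off_A y <= pt_law x y.
Proof. by rewrite /vrestr; case: (_ \notin _); rewrite ?mulr1 ?mulr0 ?pt_law_ge0. Qed.

Lemma Pr_hit_by m : Pr P (pt_law x) m (hit_by A m) = 1 - G m.
Proof.
rewrite Pr_predC // mass_pt_law /nohit_prob -Pr_killed; congr (_ - _).
rewrite /Pr; apply: eq_bigl => w /=; rewrite negb_exists.
apply/forallP/andP => [notA|[notA0 /forallP notA] i].
  by split; [exact: notA ord0 | apply/forallP => i; exact: notA _].
by case: (unliftP ord0 i) => [j ->|->]; [exact: notA j | exact: notA0].
Qed.

Lemma nohit_prob_le m m' : (m <= m')%N -> G m' <= G m.
Proof.
move=> le_mm'; rewrite /nohit_prob -(subnKC le_mm') vpow_add.
apply: mass_vpow_le; [|exact: killed_ge0|exact: sum_killed_le1].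
by move=> y; apply: vpow_ge0 => //; exact: killed_ge0.
Qed.

Lemma nohit_prob_le1 m : G m <= 1.
Proof.
apply: le_trans (nohit_prob_le _ _ (leq0n m)) _.
by rewrite -(mass_pt_law x); apply: ler_sum => y _; apply: x_off_A_le.
Qed.

Lemma vpow_killed_off_A v k : (forall y, y \in A -> v y = 0) ->
  vpow v K k = vpow v L k /\ (forall y, y \in A -> vpow v L k y = 0).
Proof.
move=> v_offA; elim: k => [|k [IH_KL IH_offA]] //=; rewrite IH_KL; split.
  apply/funext => y; apply: eq_bigr => z _.
  case: (boolP (z \in A)) => zA; first by rewrite IH_offA // !mul0r.
  by rewrite /killed /no_entry zA.
by move=> y yA; rewrite /vmul big1 // => z _; rewrite /killed yA mulr0 mulr0.
Qed.

Lemma nohit_prob_split r s : (r <= s)%N ->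
  G s = mass (vpow (vpow x_off_A L r) K (s - r)).
Proof.
move=> le_rs; have x_off_A0 y : y \in A -> x_off_A y = 0.
  by move=> yA; rewrite /vrestr yA mulr0.
have [_ offA] := vpow_killed_off_A _ r x_off_A0.
by rewrite /nohit_prob -(subnKC le_rs) vpow_add subnKC // (vpow_killed_off_A _ _ offA).1.
Qed.

Lemma noentry_after_Ppow r m :
  `|mass (vpow (vpow (pt_law x) P r) K m) - F m| <= dTV (Ppow P r x) pi.
Proof.
rewrite noentry_prob_pt_law mass_vpow_pt_law; under eq_bigr do rewrite -Ppow_vpow.
by apply: dTV_test_fun => z; apply: noentry_from_bounds.
Qed.

(* Started from x, the chain has mixed by time r without visiting A, after which it
   sees A as the stationary chain does. *)
Lemma nohit_noentry_dist r s :
  `|G s - F s| <= (1 - G r) + dTV (Ppow P r x) pi + r%:R * mu.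
Proof.
have dTV_r_ge0 := dTV_ge0 (Ppow P r x) pi.
have mu_nneg : 0 <= mu by apply: mu_ge0.
have F_sub k j : F k - F (k + j) <= j%:R * mu by apply: noentry_prob_sub_le.
have F_s_le1 : F s <= 1 by apply: noentry_prob_le1.
rewrite ler_norml.
have [lt_sr|le_rs] := ltnP s r.
  have G_mono := nohit_prob_le _ _ (ltnW lt_sr); have G_s_le1 := nohit_prob_le1 s.
  have := F_sub 0 s; rewrite add0n noentry_prob0 // => F_s_ge.
  have smu_le : s%:R * mu <= r%:R * mu by rewrite ler_wpM2r // ler_nat ltnW.
  by apply/andP; split; lra.
set Mx := mass (vpow (vpow (pt_law x) P r) K (s - r)).
have := noentry_after_Ppow r (s - r); rewrite -/Mx ler_norml => /andP[mix1 mix2].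
have /andP[gap1 gap2] : 0 <= Mx - G s <= 1 - G r.
  rewrite (nohit_prob_split r) // /Mx !mass_vpow_pt_law.
  have /andP[-> /le_trans] := sum_mul_sub_bounds (vpow (pt_law x) P r) (vpow x_off_A L r)
    (noentry_from P A (s - r))
    (vpow_le _ _ _ _ _ x_off_A_ge0 x_off_A_le (killed_ge0 _ P_sto _) (killed_le _ P_sto _))
    (noentry_from_bounds _ _ P_sto _).
  by apply; rewrite -!/(mass _) mass_vpow_eq ?mass_pt_law //; case: P_sto.
have := F_sub (s - r)%N r; rewrite subnK // => F_gap.
have F_mono : F s <= F (s - r) by apply: noentry_prob_le; rewrite ?leq_subr.
by apply/andP; split; lra.
Qed.

Lemma Pr_scaled_hit_le (c t : R) : 0 < c -> 0 <= t ->
  Pr P (pt_law x) (Num.truncn (t / c)) (scaled_hit_le A c t (Num.truncn (t / c)))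
  = 1 - G (Num.truncn (t / c)).
Proof.
move=> c_gt0 t_ge0; rewrite -Pr_hit_by /Pr; apply: eq_bigl => w /=.
apply: eq_existsb => i; case: (w i \in A) => //=.
apply: le_trans (_ : c * (Num.truncn (t / c))%:R <= t).
  by rewrite ler_pM2l // ler_nat -ltnS ltn_ord.
by rewrite -ler_pdivlMl // [_^-1 * _]mulrC truncn_le divr_ge0 // ltW.
Qed.

End Hitting.

Local Open Scope classical_set_scope.
Local Open Scope ring_scope.

Section Asymptotics.
Context {R : realType}.
Implicit Types (f g a c q beta : nat -> R) (k : nat -> nat).

Lemma cvg_near_eq f g (l : R) :
  (\forall n \near \oo, f n = g n) -> g @ \oo --> l -> f @ \oo --> l.
Proof. by move=> fg /(cvg_trans _); apply; apply: near_eq_cvg; apply: filterS fg. Qed.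

(* exp (- k c / (1 - c)) <= (1 - c) ^ k <= exp (- k c), both sides from 1 + x <= exp x. *)
Lemma cvg_one_sub_pow c k (t : R) :
  c @ \oo --> (0 : R) -> (fun n => (k n)%:R * c n) @ \oo --> t ->
  (fun n => (1 - c n) ^+ k n) @ \oo --> expR (- t).
Proof.
move=> c0 kc; have c_lt1 : \forall n \near \oo, c n < 1 by apply: cvgr_lt c0 _ ltr01.
have expRN_cvg g : g @ \oo --> t -> (fun n => expR (- g n)) @ \oo --> expR (- t).
  by move=> gt; apply: continuous_cvg; [exact: continuous_expR | exact: cvgN].
have lower : (fun n => expR (- ((k n)%:R * c n / (1 - c n)))) @ \oo --> expR (- t).
  have c1 : (fun n => 1 - c n) @ \oo --> (1 - 0 : R) by apply: cvgB => //; exact: cvg_cst.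
  rewrite subr0 in c1; apply: expRN_cvg.
  have kc1 : (fun n => (k n)%:R * c n / (1 - c n)) @ \oo --> (t * 1^-1).
    by apply: cvgM => //; apply: cvgV => //; exact: oner_neq0.
  by rewrite invr1 mulr1 in kc1.
apply: squeeze_cvgr lower (expRN_cvg _ kc); near=> n.
have c_lt1n : c n < 1 by near: n.
have c1_gt0 : 0 < 1 - c n by rewrite subr_gt0.
have expR_pow x : expR (- ((k n)%:R * x)) = expR (- x) ^+ k n.
  by rewrite -mulrN expRM_natl.
rewrite -mulrA !expR_pow; apply/andP; split.
  apply: lerXn2r; [by rewrite nnegrE expR_ge0 | by rewrite nnegrE ltW |].
  rewrite expRN -[leRHS]invrK lef_pV2 ?posrE ?expR_gt0 ?invr_gt0 //.
  have inv_c1 : 1 + c n / (1 - c n) = (1 - c n)^-1 by field; rewrite gt_eqF.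
  by rewrite -[X in X <= _]inv_c1 expR_ge1Dx.
apply: lerXn2r; [by rewrite nnegrE ltW | by rewrite nnegrE expR_ge0 |].
exact: expR_ge1Dx.
Unshelve. all: by end_near.
Qed.

Lemma cvg_equiv0 beta c : beta @ \oo --> (0 : R) -> (\forall n \near \oo, 0 < beta n) ->
  (fun n => c n / beta n) @ \oo --> (1 : R) -> c @ \oo --> (0 : R).
Proof.
move=> beta0 beta_gt0 cbeta.
have beta_c : (fun n => beta n * (c n / beta n)) @ \oo --> (0 * 1 : R) by apply: cvgM.
rewrite mul0r in beta_c; apply: cvg_near_eq beta_c; apply: filterS beta_gt0 => n beta_n_gt0.
by rewrite mulrC divfK // gt_eqF.
Qed.

Lemma cvg_one_sub_pow_equiv beta c k (t : R) :
  beta @ \oo --> (0 : R) -> (\forall n \near \oo, 0 < beta n) ->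
  (fun n => (k n)%:R * beta n) @ \oo --> t -> (fun n => c n / beta n) @ \oo --> (1 : R) ->
  (fun n => (1 - c n) ^+ k n) @ \oo --> expR (- t).
Proof.
move=> beta0 beta_gt0 kbeta cbeta; apply: cvg_one_sub_pow.
  exact: cvg_equiv0 _ _ beta0 beta_gt0 cbeta.
have kbeta_c : (fun n => (k n)%:R * beta n * (c n / beta n)) @ \oo --> (t * 1).
  by apply: cvgM.
rewrite mulr1 in kbeta_c; apply: cvg_near_eq kbeta_c; apply: filterS beta_gt0 => n beta_n_gt0.
by rewrite mulrACA divff ?mulr1 // gt_eqF.
Qed.

Lemma cvg_perturbed_ratio beta q a :
  (fun n => (1 - q n) / beta n) @ \oo --> (1 : R) -> (fun n => a n / beta n) @ \oo --> (0 : R) ->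
  (fun n => (1 - (q n + a n)) / beta n) @ \oo --> (1 : R).
Proof.
move=> q_ratio a_ratio.
have lim : (fun n => (1 - q n) / beta n - a n / beta n) @ \oo --> (1 - 0 : R) by apply: cvgB.
rewrite subr0 in lim.
by apply: cvg_near_eq lim; apply: nearW => n; rewrite opprD addrA mulrBl.
Qed.

Lemma near_perturbed_gt0 beta q a :
  beta @ \oo --> (0 : R) -> (\forall n \near \oo, 0 < beta n) ->
  (fun n => (1 - q n) / beta n) @ \oo --> (1 : R) -> (fun n => a n / beta n) @ \oo --> (0 : R) ->
  \forall n \near \oo, 0 < q n + a n.
Proof.
move=> beta0 beta_gt0 q_ratio a_ratio.
have := cvg_equiv0 _ _ beta0 beta_gt0 (cvg_perturbed_ratio _ _ _ q_ratio a_ratio).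
by move/cvgr_lt => /(_ 1 ltr01); apply: filterS => n; rewrite ltrBlDr ltrDl.
Qed.

Lemma cvg_pow_perturbed beta q a k (t : R) :
  beta @ \oo --> (0 : R) -> (\forall n \near \oo, 0 < beta n) ->
  (fun n => (k n)%:R * beta n) @ \oo --> t ->
  (fun n => (1 - q n) / beta n) @ \oo --> (1 : R) -> (fun n => a n / beta n) @ \oo --> (0 : R) ->
  (fun n => (q n + a n) ^+ k n) @ \oo --> expR (- t).
Proof.
move=> beta0 beta_gt0 kbeta q_ratio a_ratio.
have lim := cvg_one_sub_pow_equiv _ _ _ _ beta0 beta_gt0 kbeta
  (cvg_perturbed_ratio _ _ _ q_ratio a_ratio).
by apply: cvg_near_eq lim; apply: nearW => n; rewrite subKr.
Qed.

Lemma cvg_succ_mul beta k (t : R) : beta @ \oo --> (0 : R) ->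
  (fun n => (k n)%:R * beta n) @ \oo --> t -> (fun n => (k n).+1%:R * beta n) @ \oo --> t.
Proof.
move=> beta0 kbeta.
have lim : (fun n => (k n)%:R * beta n + beta n) @ \oo --> (t + 0) by apply: cvgD.
rewrite addr0 in lim.
by apply: cvg_near_eq lim; apply: nearW => n; rewrite mulrSr mulrDl mul1r.
Qed.

Lemma near_le_of_ratio0 (h b : nat -> nat) :
  (\forall n \near \oo, (0 < b n)%N) -> (fun n => (h n)%:R / (b n)%:R) @ \oo --> (0 : R) ->
  \forall n \near \oo, (h n <= b n)%N.
Proof.
move=> b_gt0 /cvgr_lt /(_ 1 ltr01) hb_lt1; apply: filterS2 b_gt0 hb_lt1 => n b_n_gt0.
by rewrite ltr_pdivrMr ?ltr0n // mul1r ltr_nat => /ltnW.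
Qed.

Lemma cvg_ratio0 f beta : (\forall n \near \oo, 0 < beta n) ->
  (\forall n \near \oo, 0 <= f n) ->
  (forall eps : R, 0 < eps -> \forall n \near \oo, f n <= eps * beta n) ->
  (fun n => f n / beta n) @ \oo --> (0 : R).
Proof.
move=> beta_gt0 f_ge0 f_small; apply/cvgrPdist_le => eps eps_gt0.
have f_half := f_small (eps / 2) (divr_gt0 eps_gt0 (ltr0Sn R 1)).
near=> n.
have beta_n_gt0 : 0 < beta n by near: n.
have f_n_ge0 : 0 <= f n by near: n.
have f_n_le : f n / beta n <= eps / 2 by rewrite ler_pdivrMr //; near: n.
rewrite sub0r normrN ger0_norm; last by rewrite divr_ge0 // ltW.
by apply: le_trans f_n_le _; rewrite ler_pdivrMr // ler_pMr // ler1n.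
Unshelve. all: by end_near.
Qed.

(* With s = floor (t / m) and k = s / b (integer part), the k blocks of length b
   cover [0, s] up to one block, so k b m is within b m of t. *)
Lemma cvg_trunc_blocks (m : nat -> R) (b : nat -> nat) (t : R) : 0 <= t ->
  (\forall n \near \oo, 0 < m n) -> (\forall n \near \oo, (0 < b n)%N) ->
  (fun n => (b n)%:R * m n) @ \oo --> (0 : R) ->
  (fun n => (Num.truncn (t / m n) %/ b n)%:R * ((b n)%:R * m n)) @ \oo --> t.
Proof.
move=> t_ge0 m_gt0 b_gt0 bm0.
have lower : (fun n => t - (b n)%:R * m n) @ \oo --> (t - 0).
  by apply: cvgB => //; exact: cvg_cst.
rewrite subr0 in lower; apply: squeeze_cvgr lower (cvg_cst t); near=> n.
have m_n_gt0 : 0 < m n by near: n.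
have b_n_gt0 : (0 < b n)%N by near: n.
set s := Num.truncn (t / m n); set bn := b n.
have s_le : s%:R * m n <= t by rewrite -ler_pdivlMr // truncn_le divr_ge0 // ltW.
have s_gt : t < s.+1%:R * m n by rewrite -ltr_pdivrMr // -truncn_le_nat.
have blocks_le : ((s %/ bn) * bn)%:R * m n <= s%:R * m n.
  by rewrite ler_pM2r // ler_nat leq_divM.
have blocks_gt : s.+1%:R * m n <= ((s %/ bn).+1 * bn)%:R * m n.
  by rewrite ler_pM2r // ler_nat ltn_ceil.
rewrite mulSnr natrD !natrM in blocks_gt; rewrite natrM in blocks_le.
apply/andP; split; lra.
Unshelve. all: by end_near.
Qed.

End Asymptotics.

Section ChainSequences.
Context {R : realType} {S : nat -> finType} (P : forall n, S n -> S n -> R)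
  (pi : forall n, S n -> R) (A : forall n, {set S n}).
Hypothesis P_sto : forall n, stochastic (P n).
Hypothesis pi_stat : forall n, stationary (P n) (pi n).

Local Notation mu_ n := (mu (P n) (pi n) (A n)).
Local Notation F_ n := (noentry_prob (P n) (pi n) (A n)).

Lemma mu_eventually_gt0 : (forall n, irreducible (P n)) -> (forall n, A n != finset.set0) ->
  (fun n => \sum_(y in A n) pi n y) @ \oo --> (0 : R) -> \forall n \near \oo, 0 < mu_ n.
Proof.
move=> P_irr A_neq0 /cvgr_lt /(_ 1 ltr01); apply: filterS => n piA_lt1.
exact: mu_gt0 (P_sto n) (pi_stat n) (P_irr n) (A_neq0 n) piA_lt1.
Qed.

Section Blocks.
Variables (b h : nat -> nat) (delta : nat -> R).
Hypothesis b_gt0 : \forall n \near \oo, (0 < b n)%N.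
Hypothesis mu_gt0 : \forall n \near \oo, 0 < mu_ n.
Hypothesis h_le_b : \forall n \near \oo, (h n <= b n)%N.
Hypothesis hb0 : (fun n => (h n)%:R / (b n)%:R) @ \oo --> (0 : R).
Hypothesis delta0 : delta @ \oo --> (0 : R).
Hypothesis M1 : \forall n \near \oo,
  Pr (P n) (pi n) (b n) (Npos (A n) (b n)) = (b n)%:R * mu_ n * (1 + delta n).

Local Notation beta n := ((b n)%:R * mu_ n).

Let beta_gt0 : \forall n \near \oo, 0 < beta n.
Proof. by apply: filterS2 b_gt0 mu_gt0 => n b_n_gt0 mu_n_gt0; rewrite mulr_gt0 ?ltr0n. Qed.

(* By (M1), 1 - F (b) = b mu (1 + o(1)); dropping the last h steps of the block
   changes this by at most h mu = o(b mu). *)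
Lemma noentry_gap_ratio :
  (fun n => (1 - F_ n (b n - h n)) / beta n) @ \oo --> (1 : R).
Proof.
have lower : (fun n => 1 + delta n - (h n)%:R / (b n)%:R) @ \oo --> (1 + 0 - 0 : R).
  by apply: cvgB => //; apply: cvgD => //; exact: cvg_cst.
have upper : (fun n => 1 + delta n) @ \oo --> (1 + 0 : R) by apply: cvgD => //; exact: cvg_cst.
rewrite subr0 addr0 in lower; rewrite addr0 in upper.
apply: squeeze_cvgr lower upper; near=> n.
have beta_n_gt0 : 0 < beta n by near: n.
have b_n_gt0 : (0 < b n)%N by near: n.
have M1n : 1 - F_ n (b n) = beta n * (1 + delta n) by rewrite -Pr_Npos //; near: n.
have F_mono : F_ n (b n) <= F_ n (b n - h n) by apply: noentry_prob_le; rewrite ?leq_subr.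
have F_gap : F_ n (b n - h n) - F_ n (b n) <= (h n)%:R * mu_ n.
  have le_hb : (h n <= b n)%N by near: n.
  by have := noentry_prob_sub_le _ _ _ (P_sto n) (pi_stat n) (b n - h n) (h n); rewrite subnK.
have hmu : (h n)%:R / (b n)%:R * beta n = (h n)%:R * mu_ n.
  by rewrite mulrA divfK // pnatr_eq0 -lt0n.
apply/andP; split.
  by rewrite ler_pdivlMr // mulrBl hmu; lra.
by rewrite ler_pdivrMr //; lra.
Unshelve. all: by end_near.
Qed.

(* F (k b) is squeezed between powers of F (b - h) -+ alpha (h), with k the number of
   blocks of length b fitting in t / mu. *)
Lemma noentry_prob_trunc_cvg (t : R) : 0 <= t ->
  (fun n => beta n) @ \oo --> (0 : R) ->
  (forall eps : R, 0 < eps -> \forall n \near \oo, alpha (P n) (pi n) (h n) <= eps * beta n) ->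
  (fun n => F_ n (Num.truncn (t / mu_ n))) @ \oo --> expR (- t).
Proof.
move=> t_ge0 beta0 alpha_small.
pose q n := F_ n (b n - h n); pose al n := alpha (P n) (pi n) (h n).
pose k n := (Num.truncn (t / mu_ n) %/ b n)%N.
have al_ratio : (fun n => al n / beta n) @ \oo --> (0 : R).
  by apply: cvg_ratio0 => //; apply: nearW => n; exact: alpha_ge0.
have Nal_ratio : (fun n => - al n / beta n) @ \oo --> (0 : R).
  by rewrite -oppr0; under eq_fun do rewrite mulNr; apply: cvgN.
have kbeta : (fun n => (k n)%:R * beta n) @ \oo --> t by exact: cvg_trunc_blocks.
have k1beta := cvg_succ_mul _ _ _ beta0 kbeta.
have upper := cvg_pow_perturbed _ _ _ _ _ beta0 beta_gt0 kbeta noentry_gap_ratio al_ratio.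
have lower := cvg_pow_perturbed _ _ _ _ _ beta0 beta_gt0 k1beta noentry_gap_ratio Nal_ratio.
have err : (fun n => (k n).+1%:R * ((h n)%:R * mu_ n)) @ \oo --> (t * 0).
  apply: cvg_near_eq (cvgM k1beta hb0); apply: filterS b_gt0 => n b_n_gt0 /=.
  by field; rewrite pnatr_eq0 -lt0n.
rewrite mulr0 in err.
have {}lower : (fun n => (q n - al n) ^+ (k n).+1 - (k n).+1%:R * ((h n)%:R * mu_ n))
  @ \oo --> (expR (- t) - 0) by apply: cvgB.
rewrite subr0 in lower.
apply: squeeze_cvgr lower upper; near=> n.
have le_hb : (h n <= b n)%N by near: n.
have b_n_gt0 : (0 < b n)%N by near: n.
have q_al_gt0 : 0 < q n - al n.
  by near: n; exact: near_perturbed_gt0 beta0 beta_gt0 noentry_gap_ratio Nal_ratio.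
apply/andP; split.
  have := noentry_prob_blocks_ge _ _ _ (P_sto n) (pi_stat n) _ _ (k n).+1 le_hb (ltW q_al_gt0).
  move/le_trans; apply; apply: (noentry_prob_le _ _ _ (P_sto n) (pi_stat n)).
  exact/ltnW/ltn_ceil.
apply: le_trans (noentry_prob_blocks_le _ _ _ (P_sto n) (pi_stat n) _ _ (k n) le_hb).
exact: (noentry_prob_le _ _ _ (P_sto n) (pi_stat n)) (leq_divM _ _).
Unshelve. all: by end_near.
Qed.

End Blocks.

Lemma nohit_sub_noentry_cvg0 (x : forall n, S n) (r s : nat -> nat) :
  (fun n => Pr (P n) (pt_law (x n)) (r n) (hit_by (A n) (r n))) @ \oo --> (0 : R) ->
  (fun n => dTV (Ppow (P n) (r n) (x n)) (pi n)) @ \oo --> (0 : R) ->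
  (fun n => (r n)%:R * mu_ n) @ \oo --> (0 : R) ->
  (fun n => nohit_prob (P n) (A n) (x n) (s n) - F_ n (s n)) @ \oo --> (0 : R).
Proof.
move=> hit0 dTV0 rmu0.
pose e n := (1 - nohit_prob (P n) (A n) (x n) (r n)) + dTV (Ppow (P n) (r n) (x n)) (pi n)
  + (r n)%:R * mu_ n.
have e0 : e @ \oo --> (0 + 0 + 0 : R).
  apply: cvgD => //; apply: cvgD => //.
  by apply: cvg_near_eq hit0; apply: nearW => n; rewrite Pr_hit_by.
rewrite !addr0 in e0; have Ne0 : (fun n => - e n) @ \oo --> (- 0 : R) by apply: cvgN.
rewrite oppr0 in Ne0; apply: squeeze_cvgr Ne0 e0; apply: nearW => n.
by rewrite -ler_norml; apply: nohit_noentry_dist.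
Qed.

End ChainSequences.

Theorem mainTheorem1 (R : realType) (S : nat -> finType)
  (P : forall n, S n -> S n -> R) (pi : forall n, S n -> R)
  (A : forall n, {set S n}) (x : forall n, S n) (b h r : nat -> nat) :
  (forall n, stochastic (P n)) ->
  (forall n, irreducible (P n)) ->
  (forall n, stationary (P n) (pi n)) ->
  (forall n, A n != finset.set0) ->
  (fun n => \sum_(y in A n) pi n y) @ \oo --> (0 : R) ->
  (fun n => mu (P n) (pi n) (A n)) @ \oo --> (0 : R) ->
  (forall M : nat, \forall n \near \oo, (M <= b n)%N) ->
  (forall M : nat, \forall n \near \oo, (M <= h n)%N) ->
  (forall M : nat, \forall n \near \oo, (M <= r n)%N) ->
  (fun n => (h n)%:R / (b n)%:R) @ \oo --> (0 : R) ->
  (fun n => (b n)%:R * mu (P n) (pi n) (A n)) @ \oo --> (0 : R) ->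
  (forall eps : R, 0 < eps -> \forall n \near \oo,
      alpha (P n) (pi n) (h n) <= eps * ((b n)%:R * mu (P n) (pi n) (A n))) ->
  (* (M1) *)
  (exists delta : nat -> R, delta @ \oo --> (0 : R) /\
     \forall n \near \oo,
       Pr (P n) (pi n) (b n) (Npos (A n) (b n))
       = (b n)%:R * mu (P n) (pi n) (A n) * (1 + delta n)) ->
  (* (M2) *)
  (fun n => Pr (P n) (pt_law (x n)) (r n) (hit_by (A n) (r n))) @ \oo --> (0 : R) ->
  (fun n => dTV (Ppow (P n) (r n) (x n)) (pi n)) @ \oo --> (0 : R) ->
  (fun n => (r n)%:R * mu (P n) (pi n) (A n)) @ \oo --> (0 : R) ->
  (* conclusion: P_{x_n}(mu_n T_{A_n} <= t) -> 1 - exp(-t) for every t >= 0 *)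
  forall t : R, 0 <= t ->
    (fun n => Pr (P n) (pt_law (x n))
                 (Num.truncn (t / mu (P n) (pi n) (A n)))
                 (scaled_hit_le (A n) (mu (P n) (pi n) (A n)) t
                    (Num.truncn (t / mu (P n) (pi n) (A n)))))
      @ \oo --> (1 - expR (- t)).
Proof.
move=> P_sto P_irr pi_stat A_neq0 piA0 _ b_big _ _ hb0 beta0 alpha_small
  [delta [delta0 M1]] hit0 dTV0 rmu0 t t_ge0.
have mu_gt0 := mu_eventually_gt0 _ _ _ P_sto pi_stat P_irr A_neq0 piA0.
have b_gt0 := b_big 1%N.
have F_cvg := noentry_prob_trunc_cvg _ _ _ P_sto pi_stat _ _ _ b_gt0 mu_gt0
  (near_le_of_ratio0 _ _ b_gt0 hb0) hb0 delta0 M1 t t_ge0 beta0 alpha_small.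
pose s n := Num.truncn (t / mu (P n) (pi n) (A n)).
have GF_cvg := nohit_sub_noentry_cvg0 _ _ _ P_sto pi_stat x r s hit0 dTV0 rmu0.
have lim : (fun n => 1 - noentry_prob (P n) (pi n) (A n) (s n)
    - (nohit_prob (P n) (A n) (x n) (s n) - noentry_prob (P n) (pi n) (A n) (s n)))
  @ \oo --> (1 - expR (- t) - 0).
  by apply: cvgB => //; apply: cvgB => //; exact: cvg_cst.
rewrite subr0 in lim; apply: cvg_near_eq lim; apply: filterS mu_gt0 => n mu_n_gt0.
by rewrite (Pr_scaled_hit_le _ _ _ (P_sto n)) //; ring.
Qed.
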